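(* Let $R$ be a unital ring with involution, let $a\in R$ be core invertible and $b\in R$ with $a\overset{\circledast}{\leq} b$. Then the following conditions are equivalent: (1) $a\overset{\#}{\leq} b$; (2) $ab=ba$; (3) $a^{2}\overset{\circledast}{\leq} b^{2}$; (4) $a^{k}\overset{\circledast}{\leq} b^{k}$ for every integer $k\geq 2$. (Here $a^k$ is core invertible for all $k\ge 1$, with $(a^k)^{\circledast}=(a^{\circledast})^k$.)
   Context: $R$ is a ring with identity and an involution $x\mapsto x^{*}$. An element $a\in R$ is core invertible if there exists $x\in R$ with $axa=a$, $xR=aR$ and $Rx=Ra^{*}$; such $x$ is unique, called the core inverse of $a$ and denoted $a^{\circledast}$. Every core invertible $a$ is group invertible, with group inverse $a^{\#}$ the unique $x$ satisfying $axa=a$, $xax=x$, $ax=xa$. For $c$ core invertible and $d\in R$, $c\overset{\circledast}{\leq} d$ means $c^{\circledast}c=c^{\circledast}d$ and $cc^{\circledast}=dc^{\circledast}$. For group invertible $a$, the sharp partial order $a\overset{\#}{\leq} b$ means $a^{\#}a=a^{\#}b$ and $aa^{\#}=ba^{\#}$. *)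

From HB Require Import structures.
From mathcomp Require Import all_boot all_order all_algebra.
Set Implicit Arguments. Unset Strict Implicit. Unset Printing Implicit Defensive.
Import GRing.Theory.
Local Open Scope ring_scope.

Definition is_involution (R : pzRingType) (star : R -> R) : Prop :=
  (forall x, star (star x) = x) /\
  (forall x y, star (x + y) = star x + star y) /\
  (forall x y, star (x * y) = star y * star x).

Definition rideal_eq (R : pzRingType) (x a : R) : Prop :=
  (exists u, x = a * u) /\ (exists v, a = x * v).
Definition lideal_eq (R : pzRingType) (x y : R) : Prop :=
  (exists u, x = u * y) /\ (exists v, y = v * x).

Definition is_core_inverse (R : pzRingType) (star : R -> R) (a x : R) : Prop :=
  a * x * a = a /\ rideal_eq x a /\ lideal_eq x (star a).

Definition core_invertible (R : pzRingType) (star : R -> R) (a : R) : Prop :=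
  exists x, is_core_inverse star a x.

Definition is_group_inverse (R : pzRingType) (a x : R) : Prop :=
  a * x * a = a /\ x * a * x = x /\ a * x = x * a.

(* core partial order c <=(core) d, with c^(core) the (unique) core inverse *)
Definition core_le (R : pzRingType) (star : R -> R) (c d : R) : Prop :=
  exists x, is_core_inverse star c x /\ x * c = x * d /\ c * x = d * x.

(* sharp partial order a <=(#) b, with a^# the (unique) group inverse *)
Definition sharp_le (R : pzRingType) (a b : R) : Prop :=
  exists x, is_group_inverse a x /\ x * a = x * b /\ a * x = b * x.

(* Under [a <=(core) b] with core inverse [c], one has [c a = c b] and
   [a c = b c], hence [b a = a a]; so everything reduces to whether also
   [a b = a a].  Commutativity gives it, and then [c^k] witnesses
   [a^k <=(core) b^k] while [c^2 a] (the group inverse of [a]) witnesses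
   [a <=(#) b].  Conversely, [c^2] is the core inverse of [a^2], so
   [a^2 <=(core) b^2] gives [c^2 a^2 = c^2 b^2 = c^2 a b], i.e.
   [c a = c^2 a b]; multiplying by [a] on the left and using [a c^2 = c]
   yields [a = c a b], whence [a b = a c a b = a a]. *)
From HB Require Import structures.
From mathcomp Require Import all_boot all_order all_algebra.
Import GRing.Theory.
Local Open Scope ring_scope.
Set Implicit Arguments. Unset Strict Implicit.

Lemma sharp_le_commute (R : pzRingType) (a b : R) :
  sharp_le a b -> a * b = b * a.
Proof.
case=> y [[aya [_ ay]] [yab ayb]].
have a_ayb : a = a * y * b by rewrite -mulrA -yab mulrA aya.
have a_bya : a = b * y * a by rewrite -ayb aya.
transitivity (a * a).
  by symmetry; rewrite {2}a_ayb !mulrA -(mulrA a a y) ay mulrA aya.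
by rewrite {1}a_bya -!mulrA (mulrA y a a) -ay aya.
Qed.

Section CoreInverse.
Variables (R : pzRingType) (star : R -> R).
Hypothesis hstar : is_involution star.

Let starK x : star (star x) = x. Proof. by case: hstar. Qed.
Let starM x y : star (x * y) = star y * star x.
Proof. by case: hstar => _ []. Qed.

(* The equational characterisation of the core inverse (Xu, Chen, Zhang). *)
Definition core_eqs (a x : R) :=
  [/\ a * x * a = a, x * a * x = x, star (a * x) = a * x,
      x * (a * a) = a & a * (x * x) = x].

Lemma core_inverse_eqs a x : is_core_inverse star a x -> core_eqs a x.
Proof.
case=> axa [[[u xu] [v av]] [[w xw] _]].
have x_xsax : x = x * star (a * x).
  have sa : star a = star a * star (a * x) by rewrite -starM axa.
  by rewrite {1}xw {1}sa mulrA -xw.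
have ax_herm : star (a * x) = a * x.
  have e : a * x = a * x * star (a * x) by rewrite -mulrA -x_xsax.
  by rewrite {1}e starM starK -e.
have xax : x * a * x = x by rewrite -mulrA -ax_herm -x_xsax.
split=> //.
- by rewrite {2}av !mulrA xax -av.
- by rewrite {2}xu !mulrA axa -xu.
Qed.

Lemma core_eqs_inverse a x : core_eqs a x -> is_core_inverse star a x.
Proof.
case=> axa xax ax_herm xaa axx; split=> //; split.
  by split; [exists (x * x); rewrite axx | exists (a * a); rewrite xaa].
split.
- by exists (x * star x); rewrite -mulrA -starM ax_herm mulrA xax.
- by exists (star a * a); rewrite -mulrA -ax_herm -starM axa.
Qed.

Lemma core_eqs_uniq a x y : core_eqs a x -> core_eqs a y -> x = y.
Proof.
case=> axa xax ax_herm xaa _ [aya _ ay_herm _ ayy].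
have x_xay : x = x * a * y.
  have sa : star a = star a * star (a * y) by rewrite -starM aya.
  transitivity (x * star (a * x)); first by rewrite ax_herm mulrA xax.
  by rewrite starM sa (mulrA (star x)) -starM ax_herm ay_herm !mulrA xax.
by rewrite x_xay -{1}ayy -mulrA (mulrA a a) mulrA xaa ayy.
Qed.

Section Powers.
Variables (a x : R).
Hypothesis hx : core_eqs a x.

Lemma exp_mul_exp_core n : a ^+ n.+1 * x ^+ n.+1 = a * x.
Proof.
have [_ _ _ _ axx] := hx; elim: n => [|n IH]; first by rewrite !expr1.
rewrite exprSr [x ^+ n.+2]exprS [x ^+ n.+1]exprS -mulrA (mulrA a x).
by rewrite (mulrA (a * x) x) -(mulrA a x x) axx -exprS IH.
Qed.

Lemma exp_core_mul_exp n : x ^+ n.+1 * a ^+ n.+1 = x * a.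
Proof.
have [_ _ _ xaa _] := hx; elim: n => [|n IH]; first by rewrite !expr1.
rewrite exprSr [a ^+ n.+2]exprS [a ^+ n.+1]exprS -mulrA (mulrA x a).
by rewrite (mulrA (x * a) a) -(mulrA x a a) xaa -exprS IH.
Qed.

Lemma core_eqs_exp n : core_eqs (a ^+ n.+1) (x ^+ n.+1).
Proof.
have [axa xax ax_herm xaa axx] := hx.
split; rewrite ?exp_mul_exp_core ?mulrA ?exp_mul_exp_core ?exp_core_mul_exp //.
- by rewrite exprS mulrA axa.
- by rewrite exprS !mulrA xax.
- by rewrite exprS mulrA -(mulrA x a a) xaa.
- by rewrite exprS mulrA -(mulrA a x x) axx.
Qed.

Lemma is_group_inverse_core : is_group_inverse a (x * x * a).
Proof.
have [axa xax _ xaa axx] := hx; split; [|split].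
- by rewrite -!mulrA xaa mulrA axa.
- by rewrite -!mulrA (mulrA a a) (mulrA x (a * a)) xaa !mulrA xax.
- by rewrite !mulrA -(mulrA a x x) axx -!mulrA xaa.
Qed.

End Powers.

Section CoreLe.
Variables (a b x : R).
Hypotheses (hx : core_eqs a x) (xa_xb : x * a = x * b) (ax_bx : a * x = b * x).

Lemma core_le_mul_sq : b * a = a * a.
Proof.
by have [axa _ _ xaa _] := hx; rewrite -{1}xaa mulrA -ax_bx mulrA axa.
Qed.

Lemma core_le_commute_sharp : a * b = b * a -> sharp_le a b.
Proof.
move=> ab; have [_ _ _ xaa _] := hx.
exists (x * x * a); split; first exact: is_group_inverse_core.
split.
- by rewrite -!mulrA ab xaa (mulrA x b) -xa_xb -mulrA xaa.
- by rewrite !mulrA -ax_bx.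
Qed.

Lemma core_le_commute_exp :
  a * b = b * a -> forall n, core_le star (a ^+ n.+1) (b ^+ n.+1).
Proof.
move=> ab n; exists (x ^+ n.+1); split.
  exact/core_eqs_inverse/core_eqs_exp.
have x_bX m : x * b ^+ m = x * a ^+ m.
  elim: m => [//|m IH].
  by rewrite exprSr mulrA IH -mulrA -(commrX m (esym ab)) mulrA -xa_xb
             -mulrA -exprS.
have bX_x m : b ^+ m * x = a ^+ m * x.
  elim: m => [//|m IH].
  by rewrite exprS -mulrA IH mulrA (commrX m (esym ab)) -mulrA -ax_bx
             mulrA -exprSr.
split.
- by rewrite [x ^+ n.+1]exprSr -!mulrA x_bX.
- by rewrite [x ^+ n.+1]exprS !mulrA bX_x.
Qed.

Lemma core_le_sq_commute :
  core_le star (a ^+ 2) (b ^+ 2) -> a * b = b * a.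
Proof.
case=> y [/core_inverse_eqs hy [ya_yb _]].
have [axa _ _ _ axx] := hx.
have y_x2 : y = x ^+ 2 := core_eqs_uniq hy (core_eqs_exp hx 1).
have x2ab : x * x * a * b = x * a.
  have := exp_core_mul_exp hx 1.
  by rewrite -y_x2 ya_yb y_x2 !expr2 -mulrA (mulrA x b b) -xa_xb !mulrA.
have a_xab : a = x * a * b.
  transitivity (a * (x * a)); first by rewrite mulrA axa.
  by rewrite -[in LHS]x2ab !mulrA -(mulrA a x x) axx.
by rewrite core_le_mul_sq {3}a_xab !mulrA axa.
Qed.

End CoreLe.
End CoreInverse.

Theorem proposition3p4 (R : pzRingType) (star : R -> R)
  (hstar : is_involution star) (a b : R)
  (ha : core_invertible star a) (hab : core_le star a b) :
  [<-> sharp_le a b;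
       a * b = b * a;
       core_le star (a ^+ 2) (b ^+ 2);
       forall k : nat, (2 <= k)%N -> core_le star (a ^+ k) (b ^+ k)].
Proof.
case: hab => x [/(core_inverse_eqs hstar) hx [xa_xb ax_bx]].
have comm_exp := core_le_commute_exp hstar hx xa_xb ax_bx.
have sq_comm := core_le_sq_commute hstar hx xa_xb ax_bx.
tfae.
- exact: sharp_le_commute.
- by move=> ab; exact: comm_exp ab 1.
- by move=> h [|[|k]] // _; exact: comm_exp (sq_comm h) k.+1.
- by move=> h; exact/(core_le_commute_sharp hx xa_xb ax_bx)/sq_comm/h.
Qed.
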